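(* Let $\Sigma_1,\Sigma_2$ be amply equivalent complete fans, $G_i=\mathrm{Hom}_{\mathbf Z}(\mathrm{Cl}(X_{\Sigma_i}),\mathbf C^\times)$, and $\varphi:\Gamma(G_1)_{\mathbf Q}\to\Gamma(G_2)_{\mathbf Q}$ the isomorphism induced by $\Psi$. Then the dual map $\varphi^*:\mathrm{Cl}(X_{\Sigma_2})_{\mathbf Q}\to\mathrm{Cl}(X_{\Sigma_1})_{\mathbf Q}$ is an isomorphism that restricts to an isomorphism $\mathrm{Pic}(X_{\Sigma_2})_{\mathbf Q}\cong\mathrm{Pic}(X_{\Sigma_1})_{\mathbf Q}$, and $\varphi^*(\mathrm{Amp}(X_{\Sigma_2})_{\mathbf Q})=\mathrm{Amp}(X_{\Sigma_1})_{\mathbf Q}$.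
   Context: For a fan $\Sigma$: rays $\Sigma(1)$, primitive generators $u_\rho$, torus-invariant divisors $D_\rho$. A primitive collection is $C\subset\Sigma(1)$ not contained in $\sigma(1)$ for any cone $\sigma$ while every proper subset is. Complete fans $\Sigma_1\subset(N_1)_{\mathbf R}$, $\Sigma_2\subset(N_2)_{\mathbf R}$ with $\mathrm{rank}N_1=\mathrm{rank}N_2$ are amply equivalent via a bijection $\Psi:\Sigma_1(1)\to\Sigma_2(1)$ if $\Psi$ maps primitive collections exactly onto primitive collections and, for all integers $(a_\rho)$, $\sum a_\rho u_\rho=0\iff\sum a_\rho u_{\Psi(\rho)}=0$. $\Gamma(G_i)=\{b\in\mathbf Z^{\Sigma_i(1)}:\sum b_\rho u_\rho=0\}$; $\varphi$ sends $(b_\rho)_{\rho\in\Sigma_1(1)}$ to $(b_{\Psi^{-1}(\rho')})_{\rho'\in\Sigma_2(1)}$. Under the perfect pairings $\mathrm{Cl}(X_{\Sigma_i})_{\mathbf Q}\times\Gamma(G_i)_{\mathbf Q}\to\mathbf Q$, $\langle\sum a_\rho D_\rho,b\rangle=\sum a_\rho b_\rho$, the dual $\varphi^*$ sends the class of $\sum_\rho q_\rho D_{\Psi(\rho)}$ to the class of $\sum_\rho q_\rho D_\rho$. $\mathrm{Amp}(X)_{\mathbf Q}$ is the rational cone over ample Cartier divisors in $\mathrm{Pic}(X)_{\mathbf Q}$. *)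

(* The lattice N is Z^n (row vectors 'rV[int]_n); N_R = 'rV[R]_n with R the
   Stdlib reals (a realType via Rstruct); M_Q = 'rV[rat]_n.
   The rays Sigma(1) are the elements of a finType I; a fan is encoded by the
   primitive generators u : I -> 'rV[int]_n together with the set C of the
   ray-sets sigma(1) of its cones. *)
From HB Require Import structures.
From mathcomp Require Import Rstruct.
From mathcomp Require Import all_boot all_order all_algebra.
Set Implicit Arguments.
Unset Strict Implicit.
Unset Printing Implicit Defensive.
Import Order.TTheory GRing.Theory Num.Theory.
Local Open Scope ring_scope.

Notation RR := Rdefinitions.R.

Section Toric.
Variables (n : nat) (I : finType) (u : I -> 'rV[int]_n).

Definition dotR (m x : 'rV[RR]_n) : RR := \sum_(i < n) m 0 i * x 0 i.

Definition uR (r : I) : 'rV[RR]_n := map_mx (fun z : int => z%:~R) (u r).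

Definition in_cone (S : {set I}) (x : 'rV[RR]_n) : Prop :=
  exists l : I -> RR, (forall r, 0 <= l r) /\ x = \sum_(r in S) l r *: uR r.

Definition is_face (K F : 'rV[RR]_n -> Prop) : Prop :=
  exists m : 'rV[RR]_n, (forall x, K x -> 0 <= dotR m x) /\
    (forall x, F x <-> (K x /\ dotR m x = 0)).

Definition primitive_vec (v : 'rV[int]_n) : Prop :=
  v != 0 /\ forall d : int, (forall i, v ord0 i \in dvdz d) -> d = 1 \/ d = -1.

Definition is_fan (C : {set {set I}}) : Prop :=
  [/\ (forall r, primitive_vec (u r)) /\ (forall r, [set r] \in C),
      forall S, S \in C -> forall x, in_cone S x -> in_cone S (- x) -> x = 0,
      forall S, S \in C -> forall r, in_cone S (uR r) -> r \in S,
      forall S, S \in C -> forall F, is_face (in_cone S) F ->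
        (exists2 T, T \in C & forall x, in_cone T x <-> F x)
    & forall S T, S \in C -> T \in C ->
        is_face (in_cone S) (fun x => in_cone S x /\ in_cone T x)].

Definition complete_fan (C : {set {set I}}) : Prop :=
  is_fan C /\ forall x : 'rV[RR]_n, exists2 S, S \in C & in_cone S x.

Definition full_dim (S : {set I}) : Prop :=
  forall x : 'rV[RR]_n, exists l : I -> RR, x = \sum_(r in S) l r *: uR r.

(* Divisors with rational coefficients: a : I -> rat is sum_rho a_rho D_rho. *)
Definition dotQ (m : 'rV[rat]_n) (v : 'rV[int]_n) : rat :=
  \sum_(i < n) m 0 i * (v 0 i)%:~R.

(* a and b have the same class in Cl(X)_Q = Q^{Sigma(1)} / M_Q,
   where div(chi^m) = sum_rho <m,u_rho> D_rho *)
Definition lin_equiv (a b : I -> rat) : Prop :=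
  exists m : 'rV[rat]_n, forall r, a r - b r = dotQ m (u r).

Definition QCartier (C : {set {set I}}) (a : I -> rat) : Prop :=
  forall S, S \in C -> exists m : 'rV[rat]_n, forall r, r \in S -> dotQ m (u r) = - a r.

Definition in_Pic (C : {set {set I}}) (a : I -> rat) : Prop :=
  exists b, lin_equiv a b /\ QCartier C b.

(* strict convexity of the support function (toric ampleness criterion for
   complete fans, Cox-Little-Schenck Thm 6.1.14) *)
Definition ample_data (C : {set {set I}}) (a : I -> rat) : Prop :=
  forall S, S \in C -> full_dim S ->
    exists m : 'rV[rat]_n, (forall r, r \in S -> dotQ m (u r) = - a r) /\
                          (forall r, r \notin S -> - a r < dotQ m (u r)).

Definition in_Amp (C : {set {set I}}) (a : I -> rat) : Prop :=
  exists b, [/\ lin_equiv a b, QCartier C b & ample_data C b].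

End Toric.

Definition primitive_collection (I : finType) (C : {set {set I}}) (P : {set I}) : Prop :=
  (forall S, S \in C -> ~~ (P \subset S)) /\
  (forall Q : {set I}, Q \proper P -> exists2 S, S \in C & Q \subset S).

Definition amply_equivalent (n : nat) (I1 I2 : finType)
    (u1 : I1 -> 'rV[int]_n) (C1 : {set {set I1}})
    (u2 : I2 -> 'rV[int]_n) (C2 : {set {set I2}}) (Psi : I1 -> I2) : Prop :=
  [/\ bijective Psi,
      forall P : {set I1}, primitive_collection C1 P <-> primitive_collection C2 (Psi @: P)
    & forall a : I1 -> int,
        \sum_(r : I1) a r *: u1 r = 0 <-> \sum_(r : I1) a r *: u2 (Psi r) = 0].

(* The map phi^* is a |-> a \o Psi on Q-divisors.  Since Psi preserves the
   integral, hence the rational, linear relations among the ray generators,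
   the assignment u_rho |-> u_Psi(rho) extends to a linear map of N_Q, and so
   does its inverse.  Characters therefore pull back along Psi, which gives
   the statement for Cl, and the span of any set of rays keeps its dimension.
   A set of rays lies in a cone iff it contains no primitive collection, so a
   set lies in a cone of Sigma_1 iff its image lies in a cone of Sigma_2;
   as full-dimensional cones are maximal, Psi maps full-dimensional cones
   onto full-dimensional cones.  Being Q-Cartier and having a strictly convex
   support function are conditions on linear functions on such cones, so
   they transfer too. *)
From HB Require Import structures.
From mathcomp Require Import Rstruct.
From mathcomp Require Import all_boot all_order all_algebra.
From mathcomp Require Import ring.
Set Implicit Arguments.
Unset Strict Implicit.
Unset Printing Implicit Defensive.
Import Order.TTheory GRing.Theory Num.Theory.
Local Open Scope ring_scope.

Lemma mulmx_pinvmx_ker (F : fieldType) m n p (A : 'M[F]_(m, n)) (B : 'M[F]_(m, p)) :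
  (forall c : 'rV_m, c *m A = 0 -> c *m B = 0) -> A *m (pinvmx A *m B) = B.
Proof.
move=> kerAB; set K := A *m pinvmx A - 1%:M.
have KA0 : K *m A = 0 by rewrite mulmxBl mulmxKpV // mul1mx subrr.
have KB0 : K *m B = 0.
  apply/row_matrixP => i; rewrite row_mul row0.
  by apply: kerAB; rewrite -row_mul KA0 row0.
by apply/eqP; rewrite mulmxA -subr_eq0 -{2}[B]mul1mx -mulmxBl KB0.
Qed.

Lemma common_denominator (I : finType) (c : I -> rat) :
  exists (d : int) (a : I -> int), d != 0 /\ forall r, (a r)%:~R = d%:~R * c r.
Proof.
exists (\prod_r denq (c r)), (fun r => numq (c r) * \prod_(s | s != r) denq (c s)).
split; first by apply/prodf_neq0 => r _; exact: denq_neq0.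
by move=> r; rewrite [X in _ = X%:~R * _](bigD1 r) //= !intrM numqE; ring.
Qed.

Lemma imset_can (T U : finType) (f : T -> U) (g : U -> T) (A : {set T}) :
  cancel f g -> g @: (f @: A) = A.
Proof. by move=> fK; rewrite -imset_comp (eq_imset _ fK) imset_id. Qed.

Lemma dotR_sum n (I : finType) (P : pred I) (m : 'rV[RR]_n) (c : I -> RR)
    (x : I -> 'rV_n) :
  dotR m (\sum_(r | P r) c r *: x r) = \sum_(r | P r) c r * dotR m (x r).
Proof.
rewrite /dotR; under eq_bigr => i _ do rewrite summxE big_distrr.
rewrite exchange_big /=; apply: eq_bigr => r _; rewrite big_distrr /=.
by apply: eq_bigr => i _; rewrite mxE mulrCA.
Qed.

Lemma dotQE n (m : 'rV[rat]_n) (v : 'rV[int]_n) :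
  dotQ m v = (map_mx intr v *m m^T) 0 0.
Proof. by rewrite /dotQ mxE; apply: eq_bigr => i _; rewrite !mxE mulrC. Qed.

Lemma map_mx_intr_eq0 (R : numDomainType) m n (A : 'M[int]_(m, n)) :
  (map_mx intr A == 0 :> 'M[R]_(m, n)) = (A == 0).
Proof.
apply/eqP/eqP => [/matrixP A0 | ->]; last by apply/matrixP => i j; rewrite !mxE.
by apply/matrixP => i j; move: (A0 i j); rewrite !mxE => /eqP; rewrite intr_eq0 => /eqP.
Qed.

Section RayMatrix.
Variables (n : nat) (I : finType) (u : I -> 'rV[int]_n).

Definition ray_mx (F : pzRingType) (S : {set I}) : 'M[F]_(#|I|, n) :=
  \matrix_(k < #|I|) (if enum_val k \in S then map_mx intr (u (enum_val k)) else 0).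

Lemma mul_ray_mx (F : pzRingType) S (w : 'rV[F]_#|I|) :
  w *m ray_mx F S = \sum_(r in S) w 0 (enum_rank r) *: map_mx intr (u r).
Proof.
rewrite mulmx_sum_row (reindex enum_rank) /=; last first.
  by exists enum_val => k _; [exact: enum_rankK | exact: enum_valK].
rewrite [RHS]big_mkcond; apply: eq_bigr => r _.
by rewrite rowK enum_rankK; case: ifP => _; rewrite ?scaler0.
Qed.

Lemma sub_ray_mxP (F : fieldType) S (x : 'rV[F]_n) :
  (x <= ray_mx F S)%MS <->
  exists l : I -> F, x = \sum_(r in S) l r *: map_mx intr (u r).
Proof.
split=> [/submxP[w ->] | [l ->]].
  by exists (fun r => w 0 (enum_rank r)); exact: mul_ray_mx.
apply/submxP; exists (\row_k l (enum_val k)); rewrite mul_ray_mx.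
by apply: eq_bigr => r _; rewrite mxE enum_rankK.
Qed.

Lemma full_dim_row_full S : full_dim u S <-> row_full (ray_mx rat S).
Proof.
have map_ray : map_mx ratr (ray_mx rat S) = ray_mx RR S.
  apply/matrixP => k j; rewrite !mxE.
  by case: ifP => _; rewrite !mxE ?rmorph_int ?rmorph0.
rewrite -(row_full_map (ratr : {rmorphism rat -> RR})) map_ray -sub1mx.
split=> [full | full1 x].
  by apply/row_subP => i; apply/sub_ray_mxP; exact: full.
by apply/sub_ray_mxP; exact: submx_trans (submx1 x) full1.
Qed.

End RayMatrix.

Section Relations.
Variables (n : nat) (I : finType) (u1 u2 : I -> 'rV[int]_n).
Hypothesis rel12 : forall a : I -> int,
  \sum_r a r *: u1 r = 0 -> \sum_r a r *: u2 r = 0.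

Lemma rat_relations (c : I -> rat) :
  \sum_r c r *: map_mx intr (u1 r) = 0 ->
  \sum_r c r *: map_mx intr (u2 r) = 0 :> 'rV[rat]_n.
Proof.
have [d [a [d_neq0 ad]]] := common_denominator c.
have scaled (u : I -> 'rV[int]_n) :
    map_mx intr (\sum_r a r *: u r) =
    d%:~R *: \sum_r c r *: map_mx intr (u r) :> 'rV[rat]_n.
  rewrite raddf_sum scaler_sumr; apply: eq_bigr => r _.
  by rewrite /= map_mxZ /= ad scalerA.
move=> /(congr1 (fun x => d%:~R *: x)); rewrite -scaled scaler0 => /eqP.
rewrite map_mx_intr_eq0 => /eqP /rel12 /eqP; rewrite -(map_mx_intr_eq0 rat) scaled.
by rewrite scaler_eq0 intr_eq0 (negbTE d_neq0) => /eqP.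
Qed.

Lemma ray_factor : exists X : 'M[rat]_n,
  forall r, map_mx intr (u2 r) = map_mx intr (u1 r) *m X.
Proof.
pose A := ray_mx u1 rat [set: I]; pose B := ray_mx u2 rat [set: I].
exists (pinvmx A *m B) => r.
have /(congr1 (row (enum_rank r))) : A *m (pinvmx A *m B) = B.
  apply: mulmx_pinvmx_ker => c; rewrite !mul_ray_mx.
  under eq_bigl do rewrite in_setT; under [X in _ -> X = 0]eq_bigl do rewrite in_setT.
  exact: rat_relations.
by rewrite row_mul !rowK enum_rankK in_setT.
Qed.

Lemma rank_ray_mx_le S : (\rank (ray_mx u2 rat S) <= \rank (ray_mx u1 rat S))%N.
Proof.
have [X u2X] := ray_factor.
suff -> : ray_mx u2 rat S = ray_mx u1 rat S *m X by exact: mxrankM_maxl.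
apply/row_matrixP => k; rewrite row_mul !rowK.
by case: ifP => _; rewrite ?mul0mx.
Qed.

Lemma dotQ_pullback (m2 : 'rV[rat]_n) :
  exists m1, forall r, dotQ m1 (u1 r) = dotQ m2 (u2 r).
Proof.
have [X u2X] := ray_factor.
by exists (m2 *m X^T) => r; rewrite !dotQE trmx_mul trmxK mulmxA u2X.
Qed.

End Relations.

Lemma full_dim_eq n (I : finType) (u1 u2 : I -> 'rV[int]_n) :
  (forall a : I -> int, \sum_r a r *: u1 r = 0 <-> \sum_r a r *: u2 r = 0) ->
  forall S, full_dim u1 S <-> full_dim u2 S.
Proof.
move=> rel S; rewrite !full_dim_row_full /row_full.
suff -> : \rank (ray_mx u1 rat S) = \rank (ray_mx u2 rat S) by [].
by apply/eqP; rewrite eqn_leq !rank_ray_mx_le // => a /rel.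
Qed.

Definition in_some_cone (I : finType) (C : {set {set I}}) (P : {set I}) : bool :=
  [exists S in C, P \subset S].

Lemma in_some_cone_mem (I : finType) (C : {set {set I}}) S : S \in C -> in_some_cone C S.
Proof. by move=> SC; apply/existsP; exists S; rewrite SC subxx. Qed.

Lemma in_some_coneP (I : finType) (C : {set {set I}}) (P : {set I}) :
  in_some_cone C P <-> forall Q : {set I}, Q \subset P -> ~ primitive_collection C Q.
Proof.
split=> [/existsP[S /andP[SC PS]] Q QP [notQS _] | noprim].
  by have := notQS S SC; rewrite (subset_trans QP PS).
apply: contraT => notP.
have [Q /minsetP[notQ minQ] QP] :=
  minset_exists (P := [pred Q : {set I} | ~~ in_some_cone C Q]) notP.
case: (noprim Q QP); split=> [S SC | R RQ].
  by apply: contra notQ => QS; apply/existsP; exists S; rewrite SC.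
have /existsP[S /andP[SC RS]] : in_some_cone C R.
  apply: contraT => notR; have RQ' := minQ R notR (proper_sub RQ).
  by rewrite RQ' properxx in RQ.
by exists S.
Qed.

Section Fan.
Variables (n : nat) (I : finType) (u : I -> 'rV[int]_n) (C : {set {set I}}).
Hypothesis fanC : is_fan u C.

Lemma in_cone_ray (S : {set I}) r : r \in S -> in_cone u S (uR u r).
Proof.
move=> rS; exists (fun s => (s == r)%:R); split=> [s | ]; first exact: ler0n.
rewrite (bigD1 r) //= eqxx scale1r big1 ?addr0 // => s /andP[_ /negbTE ->].
by rewrite scale0r.
Qed.

(* The hyperplane [m] cutting the face [T :&: S] out of [T] vanishes on the
   spanning rays of [S], hence everywhere, so that face is all of [T]. *)
Lemma full_dim_cone_maximal S T :
  S \in C -> full_dim u S -> T \in C -> S \subset T -> T = S.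
Proof.
case: fanC => _ _ ray_in_cone _ face_inter SC fullS TC ST.
have [m [_ face_eq]] := face_inter T S TC SC.
apply/eqP; rewrite eqEsubset ST andbT; apply/subsetP => r rT.
have m_S s : s \in S -> dotR m (uR u s) = 0.
  move=> sS; apply: ((face_eq (uR u s)).1 _).2.
  by split; apply: in_cone_ray; rewrite ?(subsetP ST).
apply: (ray_in_cone _ SC); apply: ((face_eq (uR u r)).2 _).2.
split; first exact: in_cone_ray.
by have [l ->] := fullS (uR u r); rewrite dotR_sum big1 // => s sS; rewrite m_S ?mulr0.
Qed.

End Fan.

Section AmpleEquivalence.
Variables (n : nat) (I1 I2 : finType) (u1 : I1 -> 'rV[int]_n) (C1 : {set {set I1}})
  (u2 : I2 -> 'rV[int]_n) (C2 : {set {set I2}}) (Psi : I1 -> I2) (Phi : I2 -> I1).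
Hypotheses (PsiK : cancel Psi Phi) (PhiK : cancel Phi Psi).
Hypothesis prim_eq :
  forall P, primitive_collection C1 P <-> primitive_collection C2 (Psi @: P).
Hypothesis rel_eq : forall a : I1 -> int,
  \sum_r a r *: u1 r = 0 <-> \sum_r a r *: u2 (Psi r) = 0.

Lemma in_some_cone_imset P : in_some_cone C1 P = in_some_cone C2 (Psi @: P).
Proof.
apply/idP/idP => /in_some_coneP noprim; apply/in_some_coneP => Q QP primQ.
  apply: (noprim (Phi @: Q)); first by rewrite -(imset_can P PsiK) imsetS.
  by apply/prim_eq; rewrite imset_can.
exact: (noprim _ (imsetS Psi QP) ((prim_eq Q).1 primQ)).
Qed.

Lemma full_dim_imset S : full_dim u1 S <-> full_dim u2 (Psi @: S).
Proof.
rewrite (full_dim_eq (u2 := u2 \o Psi) rel_eq).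
split=> full x; have [l ->] := full x.
  exists (l \o Phi); rewrite big_imset /=; last exact: in2W (can_inj PsiK).
  by apply: eq_bigr => r _; rewrite PsiK.
by exists (l \o Psi); rewrite big_imset //; exact: in2W (can_inj PsiK).
Qed.

Lemma dotQ_pull (m2 : 'rV[rat]_n) :
  exists m1, forall r, dotQ m1 (u1 r) = dotQ m2 (u2 (Psi r)).
Proof. exact: (dotQ_pullback (u2 := u2 \o Psi) (fun a => (rel_eq a).1)). Qed.

Lemma lin_equiv_pull a1 b1 a2 b2 : a1 =1 a2 \o Psi -> b1 =1 b2 \o Psi ->
  lin_equiv u2 a2 b2 -> lin_equiv u1 a1 b1.
Proof.
move=> Ea Eb [m2 Hm2]; have [m1 Hm1] := dotQ_pull m2.
by exists m1 => r; rewrite Ea Eb Hm1 Hm2.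
Qed.

Lemma QCartier_pull b1 b2 : b1 =1 b2 \o Psi -> QCartier u2 C2 b2 -> QCartier u1 C1 b1.
Proof.
move=> Eb cart2 S SC1.
have /existsP[T /andP[TC2 ST]] : in_some_cone C2 (Psi @: S).
  by rewrite -in_some_cone_imset in_some_cone_mem.
have [m2 Hm2] := cart2 T TC2; have [m1 Hm1] := dotQ_pull m2.
by exists m1 => r rS; rewrite Hm1 Eb Hm2 // (subsetP ST) ?imset_f.
Qed.

Hypothesis fan1 : is_fan u1 C1.

Lemma full_cone_imset S : S \in C1 -> full_dim u1 S -> Psi @: S \in C2.
Proof.
move=> SC1 fullS.
have /existsP[T /andP[TC2 ST]] : in_some_cone C2 (Psi @: S).
  by rewrite -in_some_cone_imset in_some_cone_mem.
have /existsP[T' /andP[T'C1 TT']] : in_some_cone C1 (Phi @: T).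
  by rewrite in_some_cone_imset imset_can // in_some_cone_mem.
have ST' : S \subset T' by rewrite -(imset_can S PsiK) (subset_trans _ TT') ?imsetS.
rewrite (full_dim_cone_maximal fan1 SC1 fullS T'C1 ST') in TT'.
suff -> : Psi @: S = T by [].
by apply/eqP; rewrite eqEsubset ST -(imset_can T PhiK) imsetS.
Qed.

Lemma ample_data_pull b1 b2 : b1 =1 b2 \o Psi ->
  ample_data u2 C2 b2 -> ample_data u1 C1 b1.
Proof.
move=> Eb amp2 S SC1 fullS.
have [m2 [on2 off2]] := amp2 _ (full_cone_imset SC1 fullS) ((full_dim_imset S).1 fullS).
have [m1 Hm1] := dotQ_pull m2.
exists m1; split=> r rS; rewrite Hm1 Eb.
  by apply: on2; exact: imset_f.
by apply: off2; rewrite (mem_imset _ _ (can_inj PsiK)).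
Qed.

Lemma in_Pic_pull a1 a2 : a1 =1 a2 \o Psi -> in_Pic u2 C2 a2 -> in_Pic u1 C1 a1.
Proof.
move=> Ea [b2 [lin2 cart2]]; exists (b2 \o Psi).
by split; [exact: lin_equiv_pull lin2 | exact: QCartier_pull cart2].
Qed.

Lemma in_Amp_pull a1 a2 : a1 =1 a2 \o Psi -> in_Amp u2 C2 a2 -> in_Amp u1 C1 a1.
Proof.
move=> Ea [b2 [lin2 cart2 amp2]]; exists (b2 \o Psi).
split; [exact: lin_equiv_pull lin2 | exact: QCartier_pull cart2 |].
exact: ample_data_pull amp2.
Qed.

End AmpleEquivalence.

Lemma amply_equivalent_sym n (I1 I2 : finType) (u1 : I1 -> 'rV[int]_n) (C1 : {set {set I1}})
    (u2 : I2 -> 'rV[int]_n) (C2 : {set {set I2}}) (Psi : I1 -> I2) (Phi : I2 -> I1) :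
  cancel Psi Phi -> cancel Phi Psi ->
  amply_equivalent u1 C1 u2 C2 Psi -> amply_equivalent u2 C2 u1 C1 Phi.
Proof.
move=> PsiK PhiK [_ prim_eq rel_eq]; split; first exact: Bijective PhiK PsiK.
  by move=> P; rewrite prim_eq imset_can.
move=> a; have reindex_Psi (w : I2 -> 'rV[int]_n) :
    \sum_r a r *: w r = \sum_r a (Psi r) *: w (Psi r).
  by apply: reindex; exists Phi => r _; [exact: PsiK | exact: PhiK].
rewrite (reindex_Psi u2) (reindex_Psi (u1 \o Phi)) /=.
under [X in _ <-> X = 0]eq_bigr do rewrite PsiK.
exact: iff_sym (rel_eq (a \o Psi)).
Qed.

Theorem proposition5p28 (n : nat) (I1 I2 : finType)
    (u1 : I1 -> 'rV[int]_n) (C1 : {set {set I1}})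
    (u2 : I2 -> 'rV[int]_n) (C2 : {set {set I2}}) (Psi : I1 -> I2) :
  complete_fan u1 C1 -> complete_fan u2 C2 ->
  amply_equivalent u1 C1 u2 C2 Psi ->
  [/\ (* phi^* is well defined and injective on Cl(X_2)_Q *)
      forall a b : I2 -> rat, lin_equiv u2 a b <-> lin_equiv u1 (a \o Psi) (b \o Psi),
      (* phi^* is surjective onto Cl(X_1)_Q *)
      forall a1 : I1 -> rat, exists a2 : I2 -> rat, lin_equiv u1 (a2 \o Psi) a1,
      (* phi^*(Pic(X_2)_Q) = Pic(X_1)_Q *)
      forall a : I2 -> rat, in_Pic u2 C2 a <-> in_Pic u1 C1 (a \o Psi)
    & (* phi^*(Amp(X_2)_Q) = Amp(X_1)_Q *)
      forall a : I2 -> rat, in_Amp u2 C2 a <-> in_Amp u1 C1 (a \o Psi)].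
Proof.
move=> [fan1 _] [fan2 _] equiv; have [[Phi PsiK PhiK] prim_eq rel_eq] := equiv.
have [_ prim_eq' rel_eq'] := amply_equivalent_sym PsiK PhiK equiv.
have back (a : I2 -> rat) : a =1 (a \o Psi) \o Phi by move=> r; rewrite /= PhiK.
split.
- move=> a b; split; first exact: (lin_equiv_pull rel_eq).
  exact: (lin_equiv_pull rel_eq' (back a) (back b)).
- move=> a1; exists (a1 \o Phi), 0 => r.
  by rewrite /= PsiK subrr /dotQ big1 // => i _; rewrite mxE mul0r.
- move=> a; split; first exact: (in_Pic_pull PsiK PhiK prim_eq rel_eq).
  exact: (in_Pic_pull PhiK PsiK prim_eq' rel_eq' (back a)).
- move=> a; split; first exact: (in_Amp_pull PsiK PhiK prim_eq rel_eq fan1).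
  exact: (in_Amp_pull PhiK PsiK prim_eq' rel_eq' fan2 (back a)).
Qed.
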